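(* Let $\mathcal{H}=(\mathcal{V},\mathcal{E})$ be a $3$-uniform Berge-$K_4$-saturated hypergraph and let $u,v\in\mathcal{V}$ be distinct. If $\mathcal{T}$ can be added on $(u,v)$, then for every positive integer $k$, $k$ copies of $\mathcal{T}$ can be added on $(u,v)$ simultaneously; that is, the hypergraph obtained from $\mathcal{H}$ by adding $2k$ new vertices $a_1^i,a_2^i$ ($1\le i\le k$) and the $2k$ hyperedges $a_1^ia_2^iu,\ a_1^ia_2^iv$ ($1\le i\le k$) is Berge-$K_4$-saturated. Moreover, it is impossible to add two copies of $\mathcal{T}$ simultaneously on two distinct pairs of vertices of $\mathcal{V}$: if $(u,v)\neq(u',v')$ are distinct pairs of vertices of $\mathcal V$, the hypergraph obtained from $\mathcal{H}$ by adding new vertices $a_1,a_2,a_3,a_4$ and hyperedges $a_1a_2u,a_1a_2v,a_3a_4u',a_3a_4v'$ is not Berge-$K_4$-saturated.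
   Context: A $3$-graph has all hyperedges of size $3$. A $3$-graph contains a Berge-$K_4$ if there are $4$ distinct vertices and $6$ distinct hyperedges, one containing each of the $6$ pairs of these vertices. A $3$-graph $\mathcal{H}$ is Berge-$K_4$-saturated if it contains no Berge-$K_4$, but for every $3$-set $e$ of vertices with $e\notin E(\mathcal{H})$, $\mathcal{H}+e$ contains a Berge-$K_4$. $\mathcal{T}$ denotes the hypergraph on $\{a_1,a_2,x_1,x_2\}$ with hyperedges $a_1a_2x_1,a_1a_2x_2$. We say $\mathcal{T}$ can be added on $(u,v)$ if the hypergraph obtained from $\mathcal{H}$ by adding two new vertices $a_1,a_2$ and the hyperedges $a_1a_2u,a_1a_2v$ (i.e. identifying $x_1,x_2$ with $u,v$) is Berge-$K_4$-saturated. *)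

From mathcomp Require Import all_boot.
Set Implicit Arguments. Unset Strict Implicit. Unset Printing Implicit Defensive.

Definition uniform3 (V : finType) (E : {set {set V}}) : Prop :=
  forall e, e \in E -> #|e| = 3.

Definition has_berge_K4 (V : finType) (E : {set {set V}}) : Prop :=
  exists (f : 'I_4 -> V) (g : 'I_4 -> 'I_4 -> {set V}),
    injective f /\
    (forall i j : 'I_4, i < j -> [/\ g i j \in E, f i \in g i j & f j \in g i j]) /\
    (forall i j i' j' : 'I_4, i < j -> i' < j' -> g i j = g i' j' -> i = i' /\ j = j').

Definition berge_K4_saturated (V : finType) (E : {set {set V}}) : Prop :=
  [/\ uniform3 E, ~ has_berge_K4 E &
      forall e : {set V}, #|e| = 3 -> e \notin E -> has_berge_K4 (e |: E)].

(* H plus k copies of T on (u,v): new vertices inr (i,false), inr (i,true)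
   (= a_1^i, a_2^i) and hyperedges a_1^i a_2^i u, a_1^i a_2^i v. *)
Definition add_T_copies (V : finType) (E : {set {set V}}) (k : nat) (u v : V)
  : {set {set (V + ('I_k * bool))}} :=
  (fun e : {set V} => (@inl V ('I_k * bool)) @: e) @: E
  :|: [set [set inr (i, false); inr (i, true); inl u] | i : 'I_k]
  :|: [set [set inr (i, false); inr (i, true); inl v] | i : 'I_k].

Definition T_addable (V : finType) (E : {set {set V}}) (u v : V) : Prop :=
  berge_K4_saturated (add_T_copies E 1 u v).

(* H plus T on (u,v) and T on (u',v'): new vertices inr 0..inr 3 = a_1..a_4. *)
Definition add_two_T (V : finType) (E : {set {set V}}) (u v u' v' : V)
  : {set {set (V + 'I_4)}} :=
  let a := fun n : nat => @inr V 'I_4 (inord n) in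
  (fun e : {set V} => (@inl V 'I_4) @: e) @: E
  :|: [set [set a 0; a 1; inl u]; [set a 0; a 1; inl v];
           [set a 2; a 3; inl u']; [set a 2; a 3; inl v']].

From mathcomp Require Import all_boot.
Set Implicit Arguments. Unset Strict Implicit. Unset Printing Implicit Defensive.

(* A core vertex of a Berge-K4 lies in at least three of its edges, and two core
   vertices together in at least five.  A new vertex of H_k lies in only two edges,
   a_1^i a_2^i u and a_1^i a_2^i v, so a Berge-K4 of H_k has its core in H; each of its
   edges then contains two old vertices, so it is not a T-edge and the Berge-K4 lives
   in H.  For saturation, a non-edge meeting two copies i <> j closes the Berge-K4 with
   core a^i, a^j, u, v, whose sixth edge is an edge of H through u and v; such an edge
   exists because T can be added on (u, v) (adding a_1 a_2 w for a third vertex w forces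
   a Berge-K4 with core a, u, v, w).  A non-edge meeting at most one copy i is the image
   of a non-edge of H_1 under the embedding of H_1 as the i-th copy.
   For two copies on distinct pairs, adding a_1 a_2 a_3 creates no Berge-K4: its core
   would contain a_3 and one of a_1, a_2, and its other two core vertices would lie in
   {u, v} (the edges at a_1, a_2) as well as in {u', v'} (the edges at a_3). *)

Lemma card_set2_le (T : finType) (x y : T) : #|[set x; y]| <= 2.
Proof. by rewrite cards2; case: (x != y). Qed.

Lemma card_set3_le (T : finType) (x y z : T) : #|[set x; y; z]| <= 3.
Proof. by rewrite setUC cardsU1 (leq_add (leq_b1 _) (card_set2_le x y)). Qed.

Lemma card_set3 (T : finType) (x y z : T) :
  x != y -> x != z -> y != z -> #|[set x; y; z]| = 3.
Proof.
by move=> xy xz yz; rewrite setUC cardsU1 cards2 xy !inE negb_or eq_sym xz eq_sym yz.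
Qed.

Lemma set2_eq_of_mem (T : finType) (a b x y : T) :
  x != y -> x \in [set a; b] -> y \in [set a; b] -> [set a; b] = [set x; y].
Proof.
move=> xy xab yab; apply/esym/eqP; rewrite eqEcard (cards2 x y) xy (card_set2_le a b) andbT.
by apply/subsetP => z /set2P [] ->.
Qed.

Lemma preimset_imset (aT rT : finType) (f : aT -> rT) (A : {set aT}) :
  injective f -> f @^-1: (f @: A) = A.
Proof. by move=> f_inj; apply/setP => x; rewrite inE mem_imset. Qed.

Lemma imset_preimset (aT rT : finType) (f : aT -> rT) (A : {set rT}) :
  {subset A <= codom f} -> f @: (f @^-1: A) = A.
Proof.
move=> Af; apply/setP => y; apply/imsetP/idP => [[x + ->]|yA]; first by rewrite inE.
by have /codomP [x yx] := Af y yA; exists x; rewrite // inE -yx.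
Qed.

Lemma inr_in_inl_imset (X Y : finType) (h : {set X}) (y : Y) :
  (inr y \in [set inl x | x in h]) = false.
Proof. by apply/negP => /imsetP []. Qed.

Lemma inl_in_inl_imset (X Y : finType) (h : {set X}) (w : X) :
  (inl w \in [set @inl X Y x | x in h]) = (w \in h).
Proof. exact/mem_imset/inl_inj. Qed.

Section BergeK4.
Variables (W : finType) (F : {set {set W}}).

Definition is_berge_K4 (f : 'I_4 -> W) (g : 'I_4 -> 'I_4 -> {set W}) :=
  injective f /\
  (forall i j : 'I_4, i < j -> [/\ g i j \in F, f i \in g i j & f j \in g i j]) /\
  (forall i j i' j' : 'I_4, i < j -> i' < j' -> g i j = g i' j' -> i = i' /\ j = j').

Lemma berge_K4_of (x0 x1 x2 x3 : W) (e01 e02 e03 e12 e13 e23 : {set W}) :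
  uniq [:: x0; x1; x2; x3] -> uniq [:: e01; e02; e03; e12; e13; e23] ->
  [/\ e01 \in F, e02 \in F & e03 \in F] -> [/\ e12 \in F, e13 \in F & e23 \in F] ->
  [/\ x0 \in e01, x0 \in e02 & x0 \in e03] -> [/\ x1 \in e01, x1 \in e12 & x1 \in e13] ->
  [/\ x2 \in e02, x2 \in e12 & x2 \in e23] -> [/\ x3 \in e03, x3 \in e13 & x3 \in e23] ->
  has_berge_K4 F.
Proof.
pose xs := [:: x0; x1; x2; x3]; pose es := [:: e01; e02; e03; e12; e13; e23].
move=> xs_uniq es_uniq [? ? ?] [? ? ?] [? ? ?] [? ? ?] [? ? ?] [? ? ?].
pose idx (i j : 'I_4) := match val i, val j with
  | 0, 1 => 0 | 0, 2 => 1 | 0, 3 => 2 | 1, 2 => 3 | 1, 3 => 4 | _, _ => 5 end.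
have idx_lt i j : idx i j < size es.
  by rewrite /idx; case: (val i) (val j) => [|[|[|?]]] [|[|[|[|?]]]].
exists (fun i => nth x0 xs i), (fun i j => nth e01 es (idx i j)); split; last split.
- by move=> i j /eqP; rewrite nth_uniq // => /eqP/val_inj.
- move=> [[|[|[|[|?]]]] ?] [[|[|[|[|?]]]] ?] //=.
- move=> i j i' j' ij ij' /eqP; rewrite nth_uniq ?idx_lt //.
  move: i j i' j' ij ij' => [[|[|[|[|?]]]] ?] [[|[|[|[|?]]]] ?].
  all: move=> [[|[|[|[|?]]]] ?] [[|[|[|[|?]]]] ?] //= _ _ _.
  all: by split; apply: val_inj.
Qed.

Section K4Edges.
Variables (f : 'I_4 -> W) (g : 'I_4 -> 'I_4 -> {set W}).
Hypothesis fgK4 : is_berge_K4 f g.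

Definition K4_edge (i j : 'I_4) := if i < j then g i j else g j i.

Lemma K4_edgeP i j :
  i != j -> [/\ K4_edge i j \in F, f i \in K4_edge i j & f j \in K4_edge i j].
Proof.
case: fgK4 => _ [gP _] ij; rewrite /K4_edge; case: ltngtP => [lt_ij|lt_ji|/val_inj eq_ij].
- exact: gP.
- by have [] := gP _ _ lt_ji.
- by rewrite eq_ij eqxx in ij.
Qed.

Lemma K4_edge_inj i j i' j' : i != j -> i' != j' ->
  K4_edge i j = K4_edge i' j' -> [set i; j] = [set i'; j'].
Proof.
case: fgK4 => _ [_ gI] ij ij'; rewrite /K4_edge.
case: (ltngtP i j) => [lt_ij|lt_ji|/val_inj eq_ij]; last by rewrite eq_ij eqxx in ij.
all: case: (ltngtP i' j') => [lt_ij'|lt_ji'|/val_inj eq_ij']; last by rewrite eq_ij' eqxx in ij'.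
all: by move=> /gI-/(_ _ _) [] // -> ->; rewrite // setUC.
Qed.

Lemma K4_edge_injr c d d' : c != d -> c != d' -> K4_edge c d = K4_edge c d' -> d = d'.
Proof.
move=> cd cd' /K4_edge_inj-/(_ cd cd') /setP/(_ d); rewrite !inE eqxx orbT eq_sym (negbTE cd).
by move=> /esym/eqP.
Qed.

Let edges_at (c : 'I_4) := [set K4_edge c d | d in [set~ c]].

Lemma card_edges_at c : #|edges_at c| = 3.
Proof.
rewrite card_in_imset ?cardsC1 ?card_ord // => d d'; rewrite !inE eq_sym => cd.
by rewrite eq_sym; exact: K4_edge_injr.
Qed.

Lemma K4_deg c {S : {set {set W}}} :
  {in F, forall x : {set W}, f c \in x -> x \in S} -> 3 <= #|S|.
Proof.
move=> cS; rewrite -(card_edges_at c); apply/subset_leq_card/subsetP => x /imsetP [d].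
by rewrite !inE eq_sym => cd ->; have [? ? _] := K4_edgeP cd; exact: cS.
Qed.

Lemma K4_deg2 c d {S : {set {set W}}} : c != d ->
  {in F, forall x : {set W}, (f c \in x) || (f d \in x) -> x \in S} -> 5 <= #|S|.
Proof.
move=> cd cdS; pose B := [set K4_edge d y | y in ~: [set c; d]].
have cardB : #|B| = 2.
  rewrite card_in_imset; first by rewrite cardsCs setCK cards2 cd card_ord.
  move=> y y'; rewrite !inE !negb_or => /andP [_ dy] /andP [_ dy'].
  by apply: K4_edge_injr; rewrite eq_sym.
have disjAB : [disjoint edges_at c & B].
  apply/pred0P => x /=; apply/negP => /andP [/imsetP [x' + ->] /imsetP [y +]].
  rewrite !inE !negb_or eq_sym => cx' /andP [yc]; rewrite eq_sym => dy.
  move=> /(K4_edge_inj cx' dy) /setP/(_ c).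
  by rewrite !inE eqxx (negbTE cd) (eq_sym c y) (negbTE yc).
have <- : #|edges_at c :|: B| = 5.
  by rewrite cardsU (disjoint_setI0 disjAB) cards0 card_edges_at cardB.
apply/subset_leq_card/subsetP => x /setUP [] /imsetP [y]; rewrite !inE ?negb_or.
- rewrite eq_sym => cy ->; have [? fc _] := K4_edgeP cy.
  by apply: cdS; rewrite ?fc.
- move=> /andP [_]; rewrite eq_sym => dy ->; have [? fd _] := K4_edgeP dy.
  by apply: cdS; rewrite ?fd ?orbT.
Qed.
End K4Edges.
End BergeK4.

Lemma berge_K4_setU1 (W : finType) (F : {set {set W}}) e f g :
  is_berge_K4 (e |: F) f g -> ~ has_berge_K4 F -> exists i j : 'I_4, i < j /\ g i j = e.
Proof.
move=> [f_inj [gP gI]] noK4.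
have [/existsP [i /existsP [j /andP [ij /eqP gij]]]|/existsPn no_e] :=
  boolP [exists i : 'I_4, exists j : 'I_4, (i < j) && (g i j == e)]; first by exists i, j.
case: noK4; exists f, g; split=> //; split=> // i j ij.
have [+ fi fj] := gP i j ij; rewrite in_setU1 => /orP [/eqP gij|//].
by have /existsPn/(_ j) := no_e i; rewrite ij gij eqxx.
Qed.

Section Transport.
Variables (W W' : finType) (phi : W -> W') (F : {set {set W}}) (F' : {set {set W'}}).
Hypothesis phi_inj : injective phi.

Lemma has_berge_K4_imset :
  {in F, forall x : {set W}, phi @: x \in F'} -> has_berge_K4 F -> has_berge_K4 F'.
Proof.
move=> FF' [f [g [f_inj [gP gI]]]].
exists (phi \o f), (fun i j => phi @: g i j); split; first exact: inj_comp.
split=> [i j ij|i j i' j' ij ij' /(imset_inj phi_inj)]; last exact: gI.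
by have [? ? ?] := gP i j ij; split; [exact: FF' | exact: imset_f..].
Qed.

Lemma berge_K4_preimset f g : is_berge_K4 F' f g -> (forall c, exists w, f c = phi w) ->
  (forall x w w', x \in F' -> w != w' -> phi w \in x -> phi w' \in x ->
     exists2 h, h \in F & x = phi @: h) ->
  has_berge_K4 F.
Proof.
move=> [f_inj [gP gI]] /fin_all_exists [f' ff'] F'F.
have gF (i j : 'I_4) : i < j -> exists2 h, h \in F & g i j = phi @: h.
  move=> ij; have [Fg] := gP i j ij; rewrite !ff'; apply: F'F => //.
  by apply: contraTneq ij => /(congr1 phi); rewrite -!ff' => /f_inj ->; rewrite ltnn.
exists f', (fun i j => phi @^-1: g i j); split.
  by move=> i j /(congr1 phi); rewrite -!ff' => /f_inj.
split=> [i j ij|i j i' j' ij ij' gij]; last first.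
  apply: gI => //; move: gij.
  have [h _ ->] := gF i j ij; have [h' _ ->] := gF i' j' ij'.
  by rewrite !preimset_imset // => ->.
have [_ fi fj] := gP i j ij; have [h hF gh] := gF i j ij.
by split; [rewrite gh preimset_imset | rewrite inE -ff'..].
Qed.
End Transport.

Definition T_edge (V : finType) (k : nat) (i : 'I_k) (z : V) : {set V + ('I_k * bool)} :=
  [set inr (i, false); inr (i, true); inl z].

Section AddTCopies.
Variables (V : finType) (E : {set {set V}}) (k : nat) (u v : V).
Local Notation H := (add_T_copies E k u v).

Lemma inl_in_T_edge (i : 'I_k) (z w : V) : (inl w \in T_edge i z) = (w == z).
Proof. by rewrite !inE (inj_eq inl_inj). Qed.

Lemma inr_in_T_edge (i j : 'I_k) (z : V) b : (inr (j, b) \in T_edge i z) = (j == i).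
Proof. by rewrite !inE !(inj_eq inr_inj) !xpair_eqE orbF; case: b; case: (j == i). Qed.

Lemma card_T_edge (i : 'I_k) (z : V) : #|T_edge i z| = 3.
Proof. by rewrite card_set3 // (inj_eq inr_inj) xpair_eqE andbF. Qed.

Lemma add_T_copiesP x : x \in H ->
  [\/ exists2 h, h \in E & x = inl @: h, exists i, x = T_edge i u | exists i, x = T_edge i v].
Proof.
rewrite !inE => /orP [/orP [] | ] /imsetP [y yE ->]; first by constructor 1; exists y.
- by constructor 2; exists y.
- by constructor 3; exists y.
Qed.

Lemma inl_imset_in_add_T_copies h : h \in E -> inl @: h \in H.
Proof. by move=> hE; rewrite !inE imset_f. Qed.

Lemma T_edge_in_add_T_copies (i : 'I_k) (z : V) : (z == u) || (z == v) -> T_edge i z \in H.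
Proof.
case/orP => /eqP ->; rewrite !inE; apply/orP; [left; apply/orP; right | right].
all: by apply/imsetP; exists i.
Qed.

Lemma uniform3_add_T_copies : uniform3 E -> uniform3 H.
Proof.
move=> E3 x /add_T_copiesP [[h hE ->]|[i ->]|[i ->]]; last 2 first; try exact: card_T_edge.
by rewrite card_imset ?E3 //; exact: inl_inj.
Qed.

Lemma add_T_copies_new_vertex x (i : 'I_k) b :
  x \in H -> inr (i, b) \in x -> x \in [set T_edge i u; T_edge i v].
Proof.
case/add_T_copiesP => [[h _ ->]|[j ->]|[j ->]]; rewrite ?inr_in_inl_imset // inr_in_T_edge.
all: by move=> /eqP ->; rewrite !inE eqxx ?orbT.
Qed.

Lemma add_T_copies_old_pair x (w w' : V) :
  x \in H -> w != w' -> inl w \in x -> inl w' \in x -> exists2 h, h \in E & x = inl @: h.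
Proof.
case/add_T_copiesP => [//|[i ->]|[i ->]] ww'; rewrite !inl_in_T_edge => /eqP wz /eqP w'z.
all: by rewrite wz w'z eqxx in ww'.
Qed.

Lemma add_T_copies_noK4 : ~ has_berge_K4 E -> ~ has_berge_K4 H.
Proof.
move=> noK4 [f [g fgK4]]; apply: noK4.
apply: (berge_K4_preimset inl_inj fgK4) => [c|]; last exact: add_T_copies_old_pair.
case fc: (f c) => [w|[i b]]; first by exists w.
suff : 3 <= #|[set T_edge i u; T_edge i v]| by rewrite leqNgt ltnS card_set2_le.
apply: (K4_deg fgK4 (c := c)) => x xH; rewrite fc; exact: add_T_copies_new_vertex.
Qed.

Lemma two_copies_K4 (h : {set V}) (i j : 'I_k) (b c : bool) (e : {set V + ('I_k * bool)}) :
  h \in E -> u \in h -> v \in h -> u != v -> i != j -> inr (i, b) \in e -> inr (j, c) \in e ->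
  has_berge_K4 (e |: H).
Proof.
move=> hE uh vh uv ij ibe jce.
have ji : j != i by rewrite eq_sym.
have vu : v != u by rewrite eq_sym.
have inH x : x \in H -> x \in e |: H by move=> ?; rewrite setU1r.
(* The six edges are told apart by which of the four core vertices they contain. *)
pose sig (x : {set V + ('I_k * bool)}) :=
  [:: inr (i, b) \in x; inr (j, c) \in x; inl u \in x; inl v \in x].
apply: (@berge_K4_of _ _ (inr (i, b)) (inr (j, c)) (inl u) (inl v)
          e (T_edge i u) (T_edge i v) (T_edge j u) (T_edge j v) (inl @: h)).
- by rewrite /= !inE !(inj_eq inr_inj) !(inj_eq inl_inj) !xpair_eqE (negbTE ij) uv.
- apply: (@map_uniq _ _ sig); rewrite /sig /= !inr_in_T_edge !inl_in_T_edge.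
  rewrite !inr_in_inl_imset !inl_in_inl_imset ibe jce uh vh.
  by rewrite (negbTE ij) (negbTE ji) (negbTE uv) (negbTE vu) !eqxx.
- by split; rewrite ?setU11 // inH // T_edge_in_add_T_copies // eqxx ?orbT.
- by split; rewrite inH // ?T_edge_in_add_T_copies ?inl_imset_in_add_T_copies // eqxx ?orbT.
all: by split; rewrite ?inr_in_T_edge ?inl_in_T_edge ?inl_in_inl_imset ?eqxx.
Qed.

End AddTCopies.

Definition copy_in (V : finType) (k : nat) (i : 'I_k) (y : V + ('I_1 * bool)) :
  V + ('I_k * bool) :=
  match y with inl w => inl w | inr (_, b) => inr (i, b) end.

Lemma copy_in_inj (V : finType) k (i : 'I_k) : injective (@copy_in V k i).
Proof. by move=> [w|[o b]] [w'|[o' b']] //= [] -> //; rewrite !ord1. Qed.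
Arguments copy_in_inj {V k} i.

Lemma copy_in_edge (V : finType) (E : {set {set V}}) (u v : V) k (i : 'I_k) x :
  x \in add_T_copies E 1 u v -> copy_in i @: x \in add_T_copies E k u v.
Proof.
case/add_T_copiesP => [[h hE ->]|[o ->]|[o ->]]; rewrite -?imset_comp.
- by rewrite (eq_imset _ (_ : copy_in i \o inl =1 inl)) // inl_imset_in_add_T_copies.
all: by rewrite /T_edge !imsetU !imset_set1 T_edge_in_add_T_copies // eqxx ?orbT.
Qed.

Lemma T_addable_third_vertex (V : finType) (E : {set {set V}}) (u v : V) :
  uniform3 E -> u != v -> T_addable E u v -> exists w, (w != u) && (w != v).
Proof.
move=> E3 uv [_ _ sat1].
(* Otherwise E is empty, and adding a_1 u v to H_1 gives a hypergraph with three edges. *)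
have [/existsP //|/existsPn only_uv] := boolP [exists w, (w != u) && (w != v)].
have E0 h : h \in E -> False.
  move=> /E3 h3; have : #|h| <= #|[set u; v]|.
    apply/subset_leq_card/subsetP => x _.
    by move: (only_uv x); rewrite !inE negb_and !negbK orbC.
  by rewrite h3 leqNgt ltnS card_set2_le.
pose e : {set V + ('I_1 * bool)} := [set inr (ord0, false); inl u; inl v].
have e3 : #|e| = 3 by rewrite card_set3 // (inj_eq inl_inj).
have e_new : e \notin add_T_copies E 1 u v.
  apply/negP => /add_T_copiesP [[h /E0 //]|[i]|[i]] /setP/(_ (inr (ord0, true)));
    by rewrite inr_in_T_edge !ord1 eqxx !inE.
have [f [g fgK4]] := sat1 e e3 e_new.
suff : 5 <= #|[set e; T_edge ord0 u; T_edge ord0 v]|.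
  by rewrite leqNgt (leq_ltn_trans (card_set3_le _ _ _)).
apply: (K4_deg2 fgK4 (c := ord0) (d := ord_max)) => // x.
rewrite in_setU1 => /orP [/eqP -> _|]; first by rewrite !inE !eqxx.
by case/add_T_copiesP => [[h /E0]|[i ->]|[i ->]] // _; rewrite ord1 !inE eqxx ?orbT.
Qed.

Section ThirdVertex.
Variables (V : finType) (E : {set {set V}}) (u v w : V).
Local Notation H1 := (add_T_copies E 1 u v).
Local Notation F := (T_edge ord0 w |: H1).

Lemma T_edge_third_new : w != u -> w != v -> T_edge ord0 w \notin H1.
Proof.
move=> wu wv; apply/negP => /add_T_copiesP [[h _ /setP/(_ (inr (ord0, false)))]|[i]|[i]].
- by rewrite inr_in_T_edge inr_in_inl_imset eqxx.
- by move=> /setP/(_ (inl w)); rewrite !inl_in_T_edge eqxx (negbTE wu).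
- by move=> /setP/(_ (inl w)); rewrite !inl_in_T_edge eqxx (negbTE wv).
Qed.

Lemma third_new_vertex x b : x \in F -> inr (ord0, b) \in x ->
  exists2 z, z \in [set u; v; w] & x = T_edge ord0 z.
Proof.
rewrite in_setU1 => /orP [/eqP -> _|/add_T_copies_new_vertex xH /xH].
  by exists w; rewrite // !inE eqxx ?orbT.
by rewrite !inE => /orP [] /eqP ->; [exists u | exists v]; rewrite // !inE eqxx ?orbT.
Qed.

Lemma third_old_pair x (w1 w2 : V) :
  x \in F -> w1 != w2 -> inl w1 \in x -> inl w2 \in x -> exists2 h, h \in E & x = inl @: h.
Proof.
rewrite in_setU1 => /orP [/eqP ->|]; last exact: add_T_copies_old_pair.
by rewrite !inl_in_T_edge => w12 /eqP w1w /eqP w2w; rewrite w1w w2w eqxx in w12.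
Qed.

Lemma third_K4_contains_uv f g : ~ has_berge_K4 E -> is_berge_K4 F f g ->
  exists c d, f c = inl u /\ f d = inl v.
Proof.
move=> noK4 fgK4; have [f_inj _] := fgK4.
have [/existsP [c]|/existsPn old] := boolP [exists c, if f c is inr _ then true else false].
  case fc: (f c) => [//|[o b]] _; rewrite ord1 in fc.
  (* f c lies only in the edges a_1 a_2 z with z in {u, v, w}, so the other three core
     vertices are old vertices among u, v, w, hence exactly u, v and w. *)
  have others d : d != c -> f d \in inl @: [set u; v; w].
    rewrite eq_sym => cd; have [Fx fcx fdx] := K4_edgeP fgK4 cd.
    rewrite fc in fcx; have [z zS xz] := third_new_vertex Fx fcx.
    case fd: (f d) fdx => [w0|[o' b']].
      by rewrite xz inl_in_T_edge => /eqP ->; rewrite imset_f.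
    move=> _; exfalso.
    have S5 : 5 <= #|[set T_edge (ord0 : 'I_1) z | z in [set u; v; w]]|.
      apply: (K4_deg2 fgK4 cd) => y Fy; rewrite fc fd ord1.
      by move=> /orP [] /(third_new_vertex Fy) [z' z'S ->]; exact: imset_f.
    by move: (leq_trans S5 (leq_trans (leq_imset_card _ _) (card_set3_le u v w))).
  have sub : f @: [set~ c] \subset inl @: [set u; v; w].
    by apply/subsetP => y /imsetP [d]; rewrite !inE => dc ->; exact: others.
  have /subsetP cover : inl @: [set u; v; w] \subset f @: [set~ c].
    rewrite -(geq_leqif (subset_leqif_card sub)) card_imset // cardsC1 card_ord.
    exact: leq_trans (leq_imset_card _ _) (card_set3_le _ _ _).
  have [cu _ fcu] : exists2 cu, cu \in [set~ c] & inl u = f cu.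
    by apply/imsetP/cover; rewrite inl_in_inl_imset !inE eqxx.
  have [cv _ fcv] : exists2 cv, cv \in [set~ c] & inl v = f cv.
    by apply/imsetP/cover; rewrite inl_in_inl_imset !inE eqxx ?orbT.
  by exists cu, cv.
case: noK4; apply: (berge_K4_preimset inl_inj fgK4) => [c|]; last exact: third_old_pair.
by move: (old c); case: (f c) => // w0 _; exists w0.
Qed.
End ThirdVertex.

Lemma T_addable_edge (V : finType) (E : {set {set V}}) (u v : V) :
  berge_K4_saturated E -> u != v -> T_addable E u v ->
  exists2 h, h \in E & (u \in h) && (v \in h).
Proof.
move=> [E3 noK4 _] uv Tadd; have [_ _ sat1] := Tadd.
have [w /andP [wu wv]] := T_addable_third_vertex E3 uv Tadd.
have [f [g fgK4]] := sat1 _ (card_T_edge _ _) (T_edge_third_new E wu wv).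
have [cu [cv [fcu fcv]]] := third_K4_contains_uv noK4 fgK4.
have cuv : cu != cv by apply: contraNneq uv => cuv; move: fcv; rewrite -cuv fcu => -[->].
have [Fx] := K4_edgeP fgK4 cuv; rewrite fcu fcv => ux vx.
have [h hE xh] := third_old_pair Fx uv ux vx.
by exists h; move: ux vx; rewrite // xh !inl_in_inl_imset => -> ->.
Qed.

Section Saturation.
Variables (V : finType) (E : {set {set V}}) (k : nat) (u v : V).
Local Notation H := (add_T_copies E k u v).

Lemma copy_in_K4 (i : 'I_k) (e : {set V + ('I_k * bool)}) :
  T_addable E u v -> #|e| = 3 -> e \notin H -> {subset e <= codom (copy_in i)} ->
  has_berge_K4 (e |: H).
Proof.
move=> [_ _ sat1] e3 eH /imset_preimset e_eq; set e1 := copy_in i @^-1: e in e_eq.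
have e1_3 : #|e1| = 3 by rewrite -e3 -e_eq card_imset //; exact: copy_in_inj.
have e1_new : e1 \notin add_T_copies E 1 u v.
  by apply: contra eH => /(copy_in_edge i); rewrite e_eq.
apply: (has_berge_K4_imset (copy_in_inj i) _ (sat1 _ e1_3 e1_new)) => x.
rewrite !in_setU1 => /orP [/eqP ->|/(copy_in_edge i) ->]; last by rewrite orbT.
by rewrite e_eq eqxx.
Qed.

Lemma add_T_copies_cases (e : {set V + ('I_k * bool)}) : 0 < k ->
  (exists i j b c, [/\ i != j, inr (i, b) \in e & inr (j, c) \in e]) \/
  exists i, {subset e <= codom (copy_in i)}.
Proof.
move=> k_gt0.
case: (pickP [pred y | if y is inr _ then y \in e else false]) => [[//|[i b]] /= ibe|no_new].
  have [/existsP [[j c] /andP [jce ji]]|/existsPn same] :=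
    boolP [exists jc : 'I_k * bool, (inr jc \in e) && (jc.1 != i)].
    by left; exists i, j, b, c; rewrite eq_sym.
  right; exists i => -[w _|[j c] jce]; apply/codomP; first by exists (inl w).
  by exists (inr (ord0, c)); move: (same (j, c)); rewrite jce /= negbK => /eqP ->.
right; exists (Ordinal k_gt0) => -[w _|[i b] ibe]; first by apply/codomP; exists (inl w).
by move: (no_new (inr (i, b))); rewrite /= ibe.
Qed.

Lemma add_T_copies_saturated :
  0 < k -> berge_K4_saturated E -> u != v -> T_addable E u v -> berge_K4_saturated H.
Proof.
move=> k_gt0 Esat uv Tadd; have [E3 noK4 _] := Esat.
split; [exact: uniform3_add_T_copies | exact: add_T_copies_noK4 |] => e e3 eH.
have [h hE /andP [uh vh]] := T_addable_edge Esat uv Tadd.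
case: (add_T_copies_cases e k_gt0) => [[i [j [b [c [ij ibe jce]]]]]|[i e_copy]].
- exact: two_copies_K4 hE uh vh uv ij ibe jce.
- exact: copy_in_K4 Tadd e3 eH e_copy.
Qed.
End Saturation.

Section TwoT.
Variables (V : finType) (E : {set {set V}}) (u v u' v' : V).
Local Notation F := (add_two_T E u v u' v').
(* [a n] is the paper's a_(n+1), so [e] is a_1 a_2 a_3. *)
Let a (n : nat) : V + 'I_4 := inr (inord n).
Let A := [set a 0; a 1; inl u].
Let B := [set a 0; a 1; inl v].
Let C := [set a 2; a 3; inl u'].
Let D := [set a 2; a 3; inl v'].
Let e := [set a 0; a 1; a 2].
Local Notation G := (e |: F).

Lemma a_eq n m : n < 4 -> m < 4 -> (a n == a m) = (n == m).
Proof.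
move=> n4 m4; rewrite /a (inj_eq inr_inj).
by apply/eqP/eqP => [/(congr1 val)|->]; rewrite /= ?inordK.
Qed.

Lemma a_inl n w : (a n == inl w) = false.
Proof. by []. Qed.

Lemma add_two_TP x :
  x \in F -> (exists2 h, h \in E & x = inl @: h) \/ x \in [set A; B; C; D].
Proof.
by rewrite /add_two_T /= in_setU => /orP [/imsetP [h hE ->]|]; [left; exists h | right].
Qed.

Lemma two_T_edge_a3 x : x \in G -> a 3 \in x -> x \in [set C; D].
Proof.
rewrite in_setU1 => /orP [/eqP ->|/add_two_TP [[h _ ->]|]]; first by rewrite !inE !a_eq.
  by rewrite /a inr_in_inl_imset.
by rewrite !inE -!orbA => /or4P [] /eqP ->; rewrite !inE ?a_eq ?a_inl ?eqxx ?orbT.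
Qed.

Lemma two_T_edge_a01 x : x \in G -> (a 0 \in x) || (a 1 \in x) -> x \in [set e; A; B].
Proof.
rewrite in_setU1 => /orP [/eqP ->|/add_two_TP [[h _ ->]|]]; first by rewrite !inE !eqxx.
  by rewrite /a !inr_in_inl_imset.
by rewrite !inE -!orbA => /or4P [] /eqP ->; rewrite !inE ?a_eq ?a_inl ?eqxx ?orbT.
Qed.

Lemma two_T_edge_a2 x : x \in G -> a 2 \in x -> x \in [set e; C; D].
Proof.
rewrite in_setU1 => /orP [/eqP ->|/add_two_TP [[h _ ->]|]]; first by rewrite !inE !eqxx.
  by rewrite /a inr_in_inl_imset.
by rewrite !inE -!orbA => /or4P [] /eqP ->; rewrite !inE ?a_eq ?a_inl ?eqxx ?orbT.
Qed.

Lemma two_T_old_a01 x w : x \in [set e; A; B] -> inl w \in x -> w \in [set u; v].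
Proof.
rewrite !inE -orbA => /or3P [] /eqP ->; rewrite !inE ?a_inl ?(inj_eq inl_inj) //=.
all: by move=> ->; rewrite ?orbT.
Qed.

Lemma two_T_old_a2 x w : x \in [set e; C; D] -> inl w \in x -> w \in [set u'; v'].
Proof.
rewrite !inE -orbA => /or3P [] /eqP ->; rewrite !inE ?a_inl ?(inj_eq inl_inj) //=.
all: by move=> ->; rewrite ?orbT.
Qed.

Section TwoTK4.
Variables (f : 'I_4 -> V + 'I_4) (g : 'I_4 -> 'I_4 -> {set V + 'I_4}).
Hypothesis fgK4 : is_berge_K4 G f g.

Lemma two_T_K4_not_a3 c : f c != a 3.
Proof.
apply/eqP => fc; suff : 3 <= #|[set C; D]| by rewrite leqNgt ltnS card_set2_le.
by apply: (K4_deg fgK4 (c := c)) => x xG; rewrite fc; exact: two_T_edge_a3.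
Qed.

Lemma two_T_K4_a01 c d : c != d -> f c \in [set a 0; a 1] -> f d \notin [set a 0; a 1].
Proof.
move=> cd fc; apply/negP => fd.
suff : 5 <= #|[set e; A; B]| by rewrite leqNgt (leq_ltn_trans (card_set3_le _ _ _)).
apply: (K4_deg2 fgK4 cd) => x xG /orP [] fx; apply: two_T_edge_a01 => //.
- by case/set2P: fc fx => <- ->; rewrite ?orbT.
- by case/set2P: fd fx => <- ->; rewrite ?orbT.
Qed.

Lemma two_T_K4_core : ~ has_berge_K4 F ->
  exists c2 c01, [/\ c2 != c01, f c2 = a 2 & f c01 \in [set a 0; a 1]].
Proof.
move=> noK4; have [f_inj [gP _]] := fgK4.
have [i [j [ij gij]]] := berge_K4_setU1 fgK4 noK4; have ij' : i != j by rewrite neq_ltn ij.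
have [_] := gP i j ij; rewrite gij => fi fj.
have e_a2 y : y \in e -> y \notin [set a 0; a 1] -> y = a 2.
  by rewrite !inE -orbA => /or3P [] /eqP -> //; rewrite eqxx ?orbT.
have [fi01|fi2] := boolP (f i \in [set a 0; a 1]).
  have fj2 := e_a2 _ fj (two_T_K4_a01 ij' fi01).
  by exists j, i; rewrite eq_sym.
exists i, j; split; rewrite ?(e_a2 _ fi fi2) //.
by apply: contraR ij' => fj2; rewrite (f_inj i j) // (e_a2 _ fi fi2) (e_a2 _ fj fj2).
Qed.

Lemma two_T_K4_other_core c2 c01 d : f c2 = a 2 -> f c01 \in [set a 0; a 1] ->
  d != c2 -> d != c01 ->
  exists2 w, f d = inl w & (w \in [set u; v]) && (w \in [set u'; v']).
Proof.
rewrite ![d == _]eq_sym => fc2 fc01 c2d c01d; have [f_inj _] := fgK4.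
case fd: (f d) => [w|n]; last first.
  have fdn : f d = a n by rewrite fd /a inord_val.
  case: n {fd} fdn => [[|[|[|[|?]]]] ?] //= fdn.
  - by have := two_T_K4_a01 c01d fc01; rewrite fdn /a !inE eqxx.
  - by have := two_T_K4_a01 c01d fc01; rewrite fdn /a !inE eqxx orbT.
  - by move: c2d; rewrite (f_inj c2 d) ?eqxx // fc2 fdn.
  - by have := two_T_K4_not_a3 d; rewrite fdn eqxx.
exists w => //; apply/andP; split.
- have [x_G fc01x fdx] := K4_edgeP fgK4 c01d; rewrite fd in fdx.
  apply: two_T_old_a01 fdx; apply: two_T_edge_a01 x_G _.
  by case/set2P: fc01 fc01x => <- ->; rewrite ?orbT.
- have [x_G fc2x fdx] := K4_edgeP fgK4 c2d; rewrite fd in fdx; rewrite fc2 in fc2x.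
  exact: two_T_old_a2 (two_T_edge_a2 x_G fc2x) fdx.
Qed.
End TwoTK4.

Lemma add_two_T_not_saturated :
  u != v -> u' != v' -> [set u; v] != [set u'; v'] -> ~ berge_K4_saturated F.
Proof.
move=> uv uv' uvu'v' [_ noK4 satF].
have e3 : #|e| = 3 by rewrite card_set3 ?a_eq.
have e_new : e \notin F.
  apply/negP => /add_two_TP [[h _ /setP/(_ (a 0))]|].
    by rewrite /a inr_in_inl_imset !inE eqxx.
  rewrite !inE -!orbA => /or4P [] /eqP /setP eE;
    [move: (eE (a 2)) | move: (eE (a 2)) | move: (eE (a 0)) | move: (eE (a 0))];
    by rewrite !inE ?a_eq ?a_inl ?eqxx ?orbT.
have [f [g fgK4]] := satF e e3 e_new; have [f_inj _] := fgK4.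
have [c2 [c01 [c21 fc2 fc01]]] := two_T_K4_core fgK4 noK4.
have /cards2P [k [l [kl kl_def]]] : #|~: [set c2; c01]| == 2.
  by rewrite cardsCs setCK cards2 c21 card_ord.
have : (k \in ~: [set c2; c01]) && (l \in ~: [set c2; c01]) by rewrite kl_def !inE !eqxx orbT.
rewrite !inE !negb_or => /andP [/andP [kc2 kc01] /andP [lc2 lc01]].
have [wk fk /andP [wk_uv wk_uv']] := two_T_K4_other_core fgK4 fc2 fc01 kc2 kc01.
have [wl fl /andP [wl_uv wl_uv']] := two_T_K4_other_core fgK4 fc2 fc01 lc2 lc01.
have wkl : wk != wl by apply: contraNneq kl => wkl; apply/eqP/f_inj; rewrite fk fl wkl.
by rewrite (set2_eq_of_mem wkl wk_uv wl_uv) (set2_eq_of_mem wkl wk_uv' wl_uv') eqxx in uvu'v'.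
Qed.
End TwoT.

Theorem lemma2p1 (V : finType) (E : {set {set V}}) :
  berge_K4_saturated E ->
  (forall u v : V, u != v -> T_addable E u v ->
     forall k : nat, 0 < k -> berge_K4_saturated (add_T_copies E k u v)) /\
  (forall u v u' v' : V, u != v -> u' != v' -> [set u; v] != [set u'; v'] ->
     ~ berge_K4_saturated (add_two_T E u v u' v')).
Proof.
move=> Esat; split=> [u v uv Tadd k k_gt0|u v u' v'].
- exact: add_T_copies_saturated.
- exact: add_two_T_not_saturated.
Qed.
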